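(* Let $\kappa=\frac4{27}$ and let the polynomials $e_n(x)$ be defined as in the context. Then for every integer $p\ge0$: $$e_{3p}(x)=\frac{1}{(-\kappa)^{3p}}\sum_{l=0}^p27^l\sum_{k=0}^{\lfloor 3l/2\rfloor}\frac{(-1)^k}{3^k}\binom{p+2l-k}{3l-2k,\ k,\ p-l}\Big(1-\frac{x}{3\kappa}\Big)^k,$$ $$e_{3p+1}(x)=\frac{3}{(-\kappa)^{3p+1}}\sum_{l=0}^p27^l\sum_{k=0}^{\lfloor(3l+1)/2\rfloor}\frac{(-1)^k}{3^k}\binom{p+2l+1-k}{3l+1-2k,\ k,\ p-l}\Big(1-\frac{x}{3\kappa}\Big)^k,$$ $$e_{3p+2}(x)=\frac{9}{(-\kappa)^{3p+2}}\sum_{l=0}^p27^l\sum_{k=0}^{\lfloor 3l/2\rfloor+1}\frac{(-1)^k}{3^k}\binom{p+2l+2-k}{3l+2-2k,\ k,\ p-l}\Big(1-\frac{x}{3\kappa}\Big)^k.$$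
   Context: The polynomials $e_n(x)$, $n\ge0$, are defined by $e_n(x)=(-\kappa)^{-n}\sum_{m_1+2m_2+3m_3=n}(-1)^{m_2}\binom{m_1+m_2+m_3}{m_1,m_2,m_3}3^{m_1+m_2}\big(1-\frac{x}{3\kappa}\big)^{m_2}$, the sum over nonnegative integers $m_1,m_2,m_3$; equivalently, they are the coefficients of the formal power series $\frac{1}{(1+t/\kappa)^3-x\,t^2/\kappa^3}=\sum_{n\ge0}e_n(x)t^n$. Here $\binom{k}{k_1,k_2,k_3}=\frac{k!}{k_1!k_2!k_3!}$ is the trinomial coefficient. *)

From mathcomp Require Import all_boot all_order all_algebra.
Set Implicit Arguments. Unset Strict Implicit. Unset Printing Implicit Defensive.
Import Order.TTheory GRing.Theory Num.Theory.
Local Open Scope ring_scope.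

Definition kappa {R : realFieldType} : R := 4%:R / 27%:R.

Definition trinom {R : realFieldType} (k k1 k2 k3 : nat) : R :=
  (k`!)%:R / ((k1`! * k2`! * k3`!)%N)%:R.

Definition e_poly {R : realFieldType} (n : nat) (x : R) : R :=
  ((- kappa) ^+ n)^-1 *
  \sum_(m1 < n.+1) \sum_(m2 < n.+1) \sum_(m3 < n.+1)
    (if (m1 + 2 * m2 + 3 * m3)%N == n then
       (-1) ^+ m2 * trinom (m1 + m2 + m3) m1 m2 m3 * 3%:R ^+ (m1 + m2)
       * (1 - x / (3%:R * kappa)) ^+ m2
     else 0).

(** The index set [m1 + 2 m2 + 3 m3 = n] of the defining sum of [e_n] is
   parametrised by [m3 = p - l] and [m2 = k], with [m1 = 3 l + r - 2 k] when
   [n = 3 p + r], [r < 3]; in these coordinates the weight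
   [3 ^ (m1 + m2) = 3 ^ (3 l + r - k)] splits as [3 ^ r * 27 ^ l / 3 ^ k]. *)

From mathcomp Require Import all_boot all_order all_algebra zify ring.
Import Order.TTheory GRing.Theory Num.Theory.
Local Open Scope ring_scope.

Section FiniteSums.

Variable R : nmodType.

Lemma sum_ord_if_addn_eq (n a : nat) (G : nat -> R) :
  \sum_(i < n.+1) (if (i + a == n)%N then G i else 0) =
  if (a <= n)%N then G (n - a)%N else 0.
Proof.
case: ifP => le_an; last by rewrite big1 // => i _; rewrite ifF //; apply/eqP; lia.
have lt_na : (n - a < n.+1)%N by lia.
rewrite (bigD1 (Ordinal lt_na)) //= ifT; last by apply/eqP; lia.
rewrite big1 ?addr0 // => i /eqP ne_i; rewrite ifF //.
by apply/eqP => eq_i; apply: ne_i; apply: val_inj => /=; lia.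
Qed.

Lemma sum_ord_if_ltn (N B : nat) (P : pred nat) (G : nat -> R) :
  (B <= N)%N -> (forall m, (m < N)%N -> P m = (m < B)%N) ->
  \sum_(m < N) (if P m then G m else 0) = \sum_(0 <= m < B) G m.
Proof.
move=> le_BN eq_P; rewrite big_mkord (big_ord_widen N G le_BN) [RHS]big_mkcond.
by apply: eq_bigr => m _; rewrite eq_P.
Qed.

Lemma sum_ord_vanishing_tail (N B : nat) (G : nat -> R) :
  (B <= N)%N -> (forall m, (B <= m < N)%N -> G m = 0) ->
  \sum_(m < N) G m = \sum_(0 <= m < B) G m.
Proof.
move=> le_BN G0; rewrite -(@sum_ord_if_ltn N B (fun m => m < B)%N G le_BN) //.
by apply: eq_bigr => m _; case: ltnP => // le_Bm; rewrite G0 // le_Bm ltn_ord.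
Qed.

Lemma sum_partitions123 (n : nat) (F : nat -> nat -> nat -> R) :
  \sum_(m1 < n.+1) \sum_(m2 < n.+1) \sum_(m3 < n.+1)
     (if (m1 + 2 * m2 + 3 * m3 == n)%N then F m1 m2 m3 else 0) =
  \sum_(0 <= m3 < (n %/ 3).+1) \sum_(0 <= m2 < ((n - 3 * m3)./2).+1)
     F (n - 3 * m3 - 2 * m2)%N m2 m3.
Proof.
rewrite exchange_big; under eq_bigr do rewrite exchange_big; rewrite exchange_big /=.
have sum_m1 m2 m3 :
    \sum_(m1 < n.+1) (if (m1 + 2 * m2 + 3 * m3 == n)%N then F m1 m2 m3 else 0) =
    if (2 * m2 + 3 * m3 <= n)%N then F (n - 3 * m3 - 2 * m2)%N m2 m3 else 0.
  under eq_bigr do rewrite -addnA.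
  by rewrite (sum_ord_if_addn_eq _ _ (fun m1 => F m1 m2 m3)) subnDA subnAC.
under eq_bigr do under eq_bigr do rewrite sum_m1.
pose inner m3 := \sum_(m2 < n.+1)
  (if (2 * m2 + 3 * m3 <= n)%N then F (n - 3 * m3 - 2 * m2)%N m2 m3 else 0).
rewrite (sum_ord_vanishing_tail _ (n %/ 3).+1 inner); first last.
- by move=> m3 /andP[lt_m3 _]; apply: big1 => m2 _; rewrite ifF //; lia.
- by rewrite ltnS leq_div.
apply: eq_big_nat => m3 /andP[_ lt_m3].
by apply: (@sum_ord_if_ltn _ _ (fun m2 => 2 * m2 + 3 * m3 <= n)%N) => [|m2 _];
  rewrite -!divn2; lia.
Qed.

Lemma sum_partitions123_3mod (p r : nat) (F : nat -> nat -> nat -> R) :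
  (r < 3)%N ->
  \sum_(m1 < (3 * p + r).+1) \sum_(m2 < (3 * p + r).+1) \sum_(m3 < (3 * p + r).+1)
     (if (m1 + 2 * m2 + 3 * m3 == 3 * p + r)%N then F m1 m2 m3 else 0) =
  \sum_(0 <= l < p.+1) \sum_(0 <= k < ((3 * l + r)./2).+1)
     F (3 * l + r - 2 * k)%N k (p - l)%N.
Proof.
move=> lt_r3; rewrite sum_partitions123.
have -> : ((3 * p + r) %/ 3 = p)%N by lia.
rewrite big_nat_rev; apply: eq_big_nat => l /andP[_ lt_lp].
have -> : (0 + p.+1 - l.+1 = p - l)%N by lia.
have -> : (3 * p + r - 3 * (p - l) = 3 * l + r)%N by lia.
by apply: eq_big_nat => k _; rewrite subnDA -[in LHS]subnDA; congr F; lia.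
Qed.

End FiniteSums.

Lemma e_poly_3mod (R : realFieldType) (p r : nat) (x : R) : (r < 3)%N ->
  e_poly (3 * p + r) x =
  ((- kappa) ^+ (3 * p + r))^-1 * 3%:R ^+ r *
    \sum_(0 <= l < p.+1) 27%:R ^+ l *
      \sum_(0 <= k < (3 * l + r)./2.+1)
        (-1) ^+ k / 3%:R ^+ k *
        trinom (p + 2 * l + r - k) (3 * l + r - 2 * k) k (p - l) *
        (1 - x / (3%:R * kappa)) ^+ k.
Proof.
move=> lt_r3; set y := 1 - x / (3%:R * kappa).
rewrite /e_poly (sum_partitions123_3mod _ p r (fun m1 m2 m3 =>
  (-1) ^+ m2 * trinom (m1 + m2 + m3) m1 m2 m3 * 3%:R ^+ (m1 + m2) * y ^+ m2)) //.
rewrite -mulrA; congr (_ * _).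
rewrite mulr_sumr; apply: eq_big_nat => l /andP[_ lt_l].
rewrite mulrA mulr_sumr; apply: eq_big_nat => k /andP[_ lt_k].
rewrite -divn2 in lt_k.
have -> : (3 * l + r - 2 * k + k + (p - l) = p + 2 * l + r - k)%N by lia.
have -> : (3 * l + r - 2 * k + k = 3 * l + r - k)%N by lia.
have pow3_split : (3%:R : R) ^+ (3 * l + r - k) * 3%:R ^+ k = 3%:R ^+ r * 27%:R ^+ l.
  rewrite -exprD subnK; last by lia.
  by rewrite addnC exprD exprM -[3%:R ^+ 3]natrX.
have pow3k_neq0 : (3%:R : R) ^+ k != 0 by rewrite expf_neq0 // pnatr_eq0.
by rewrite -pow3_split; field.
Qed.

Theorem proposition10 (R : realFieldType) (p : nat) (x : R) :
  [/\ e_poly (3 * p) x =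
        ((- kappa) ^+ (3 * p))^-1 *
        \sum_(0 <= l < p.+1) 27%:R ^+ l *
          \sum_(0 <= k < (3 * l)./2.+1)
            (-1) ^+ k / 3%:R ^+ k *
            trinom (p + 2 * l - k) (3 * l - 2 * k) k (p - l) *
            (1 - x / (3%:R * kappa)) ^+ k,
      e_poly (3 * p + 1) x =
        3%:R / (- kappa) ^+ (3 * p + 1) *
        \sum_(0 <= l < p.+1) 27%:R ^+ l *
          \sum_(0 <= k < (3 * l + 1)./2.+1)
            (-1) ^+ k / 3%:R ^+ k *
            trinom (p + 2 * l + 1 - k) (3 * l + 1 - 2 * k) k (p - l) *
            (1 - x / (3%:R * kappa)) ^+ k
    & e_poly (3 * p + 2) x =
        9%:R / (- kappa) ^+ (3 * p + 2) *
        \sum_(0 <= l < p.+1) 27%:R ^+ l *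
          \sum_(0 <= k < ((3 * l)./2 + 1).+1)
            (-1) ^+ k / 3%:R ^+ k *
            trinom (p + 2 * l + 2 - k) (3 * l + 2 - 2 * k) k (p - l) *
            (1 - x / (3%:R * kappa)) ^+ k].
Proof.
split.
- have := @e_poly_3mod R p 0 x isT; rewrite !addn0 expr0 mulr1 => ->.
  by under eq_bigr do (under eq_bigr do rewrite !addn0; rewrite addn0).
- by rewrite e_poly_3mod // expr1 [_ * 3%:R]mulrC.
- rewrite e_poly_3mod // [_ * 3%:R ^+ 2]mulrC -natrX.
  have half3l2 l : ((3 * l + 2)./2 = (3 * l)./2 + 1)%N by rewrite -!divn2; lia.
  by under eq_bigr do rewrite half3l2.
Qed.
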